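(* Let $\lambda\in(0,r^\alpha)$ and consider the $\lambda$-NRW on the augmented tree. For $f\in\mathcal D_X$: (i) there exists $C>0$ (depending on $f$) such that for every geodesic ray $(\mathbf x_n)_n$, $|f(\mathbf x_{n+1})-f(\mathbf x_n)|\le C(\lambda/r^\alpha)^{n/2}$ for all $n$, and hence $\lim_{n\to\infty}f(\mathbf x_n)$ exists; (ii) if two geodesic rays $(\mathbf x_n)_n$ and $(\mathbf y_n)_n$ converge to the same point of $K$, then $\lim_nf(\mathbf x_n)=\lim_nf(\mathbf y_n)$.
   Context: Let $\{S_i\}_{i=1}^N$ ($N\ge2$) be contractive similitudes of $\mathbb R^d$ with ratios $r_i\in(0,1)$ satisfying the open set condition; $K$ the self-similar set, $\alpha$ its Hausdorff dimension ($\sum r_i^\alpha=1$), $r=\min r_i$. $\Sigma^*$ finite words with empty word $\vartheta$, $S_{\mathbf x}=S_{i_1}\circ\cdots\circ S_{i_k}$, $r_{\mathbf x}=r_{i_1}\cdots r_{i_k}$. $\mathcal J_0=\{\vartheta\}$, $\mathcal J_n=\{i_1\cdots i_k:r_{i_1\cdots i_k}\le r^n<r_{i_1\cdots i_{k-1}}\}$, $X=\bigcup_n\mathcal J_n$, $|\mathbf x|=n$ on $\mathcal J_n$, parent $\mathbf x^-$ the prefix in $\mathcal J_{n-1}$. Edges: $\{\mathbf x,\mathbf x^-\}$ and horizontal $\{\mathbf x,\mathbf y\}$ ($\mathbf x\ne\mathbf y\in\mathcal J_n$, $\inf_{\xi,\eta\in K}|S_{\mathbf x}(\xi)-S_{\mathbf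 y}(\eta)|\le\gamma r^n$); $\mathbf x\sim\mathbf y$ denotes adjacency. A geodesic ray is $(\mathbf x_n)$, $\mathbf x_n\in\mathcal J_n$, each a prefix of the next; it converges to $\xi$ if $\xi\in S_{\mathbf x_n}(K)$ for all $n$. The $\lambda$-NRW conductances: $c(\mathbf x,\mathbf x^-)=r_{\mathbf x}^\alpha\lambda^{-|\mathbf x|}$, $c(\mathbf x,\mathbf y)\asymp r_{\mathbf x}^\alpha\lambda^{-|\mathbf x|}$ for horizontal edges, zero otherwise. $\mathcal E_X[f]=\frac12\sum_{\mathbf x\sim\mathbf y}c(\mathbf x,\mathbf y)(f(\mathbf x)-f(\mathbf y))^2$, $\mathcal D_X=\{f:X\to\mathbb R:\mathcal E_X[f]<\infty\}$. *)

From HB Require Import structures.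
From mathcomp Require Import all_boot all_order all_algebra.
From mathcomp Require Import all_classical all_reals all_analysis.
Set Implicit Arguments. Unset Strict Implicit. Unset Printing Implicit Defensive.
Import Order.TTheory GRing.Theory Num.Theory.
Import numFieldNormedType.Exports.
Local Open Scope classical_set_scope.
Local Open Scope ring_scope.

Section SelfSimilar.
Variables (R : realType) (d N : nat).

Definition edist (x y : 'rV[R]_d) : R :=
  Num.sqrt (\sum_(k < d) (x ord0 k - y ord0 k) ^+ 2).

Variable S : 'I_N -> 'rV[R]_d -> 'rV[R]_d.
Variable rs : 'I_N -> R.

Definition contractive_similitudes : Prop :=
  forall i, 0 < rs i < 1 /\
    forall x y, edist (S i x) (S i y) = rs i * edist x y.

Definition OSC : Prop :=
  exists U : set 'rV[R]_d, open U /\ U !=set0 /\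
    (forall i, S i @` U `<=` U) /\
    (forall i j, i != j -> (S i @` U) `&` (S j @` U) = set0).

Definition self_similar_set (K : set 'rV[R]_d) : Prop :=
  compact K /\ K !=set0 /\ K = \bigcup_(i in [set: 'I_N]) (S i @` K).

Definition rmin : R := \big[Num.min/1]_(i < N) rs i.

Definition word := seq 'I_N.

Definition Sw (x : word) : 'rV[R]_d -> 'rV[R]_d :=
  foldr (fun i g => S i \o g) id x.

Definition rw (x : word) : R := \prod_(i <- x) rs i.

Definition inJ (n : nat) (x : word) : Prop :=
  if n is 0 then x = [::]
  else x <> [::] /\ rw x <= rmin ^+ n /\ rmin ^+ n < rw (take (size x).-1 x).

Definition inX (x : word) : Prop := exists n, inJ n x.

Definition vedge (x y : word) : Prop :=
  exists n, inJ n.+1 x /\ inJ n y /\ prefix y x.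

Variable K : set 'rV[R]_d.
Variable gamma : R.

Definition hedge (x y : word) : Prop :=
  exists n, inJ n x /\ inJ n y /\ x <> y /\
    inf [set edist (Sw x xi) (Sw y eta) | xi in K & eta in K] <= gamma * rmin ^+ n.

Definition adj (x y : word) : Prop := vedge x y \/ vedge y x \/ hedge x y.

Variable lambda alpha : R.

Definition NRW_conductance (c : word -> word -> R) : Prop :=
  (forall x y, c x y = c y x) /\
  (forall n x y, inJ n.+1 x -> inJ n y -> prefix y x ->
      c x y = rw x `^ alpha * lambda ^- n.+1) /\
  (exists C1 C2 : R, 0 < C1 /\ 0 < C2 /\
     forall n x y, inJ n x -> hedge x y ->
       C1 * (rw x `^ alpha * lambda ^- n) <= c x y /\
       c x y <= C2 * (rw x `^ alpha * lambda ^- n)) /\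
  (forall x y, ~ adj x y -> c x y = 0).

Definition energy (c : word -> word -> R) (f : word -> R) : \bar R :=
  (2^-1)%:E * \esum_(p in [set p : word * word | adj p.1 p.2])
                 (c p.1 p.2 * (f p.1 - f p.2) ^+ 2)%:E.

Definition in_DX (c : word -> word -> R) (f : word -> R) : Prop :=
  (energy c f < +oo)%E.

Definition geodesic_ray (xs : nat -> word) : Prop :=
  forall n, inJ n (xs n) /\ prefix (xs n) (xs n.+1).

Definition ray_converges_to (xs : nat -> word) (xi : 'rV[R]_d) : Prop :=
  forall n, xi \in Sw (xs n) @` K.

End SelfSimilar.

(* Finite energy bounds c(x,y) (f x - f y)^2 by a constant M on every edge.  Since
   r_x >= r^(n+1) on J_n, every edge at level n has conductance at least of order
   r^alpha (r^alpha / lambda)^n, so |f x - f y| = O((lambda / r^alpha)^(n/2)) across it.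
   Along a geodesic ray the increments are thus dominated by a convergent geometric
   series.  Two rays converging to the same point xi are joined at every level n by a
   horizontal edge, because both cells S_x(K), S_y(K) contain xi, so the gap between
   them decays geometrically as well. *)

From Pilot Require Import Defs.
From HB Require Import structures.
From mathcomp Require Import all_boot all_order all_algebra.
From mathcomp Require Import all_classical all_reals all_analysis.
From mathcomp Require Import ring.
Import Order.TTheory GRing.Theory Num.Theory.
Import numFieldNormedType.Exports.
Local Open Scope classical_set_scope.
Local Open Scope ring_scope.
Set Implicit Arguments. Unset Strict Implicit. Unset Printing Implicit Defensive.

Section GeometricIncrements.
Variables (R : realType) (V : completeNormedModType R).

Lemma cvgn_geometric_increments (u : V ^nat) (C s : R) :
  `|s| < 1 -> (forall n, `|u n.+1 - u n| <= C * s ^+ n) -> cvgn u.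
Proof.
move=> s1 du.
have -> : u = (fun n => u 0%N + series (telescope u) n).
  by apply/funext => n; exact: eq_sum_telescope.
apply: is_cvgD; first exact: is_cvg_cst.
apply: normed_cvg; apply: (@series_le_cvg _ _ (geometric C s)) => n //=.
- exact: le_trans (du n).
- exact: du.
- exact: is_cvg_geometric_series.
Qed.

Lemma limn_eq_geometric_gap (u v : V ^nat) (C s : R) :
  `|s| < 1 -> cvgn u -> cvgn v -> (forall n, `|u n - v n| <= C * s ^+ n) ->
  limn u = limn v.
Proof.
move=> s1 cu cv duv.
have gap0 : (u - v) @ \oo --> 0.
  apply: norm_cvg0; apply: (@squeeze_cvgr _ _ _ _ (cst 0) (geometric C s)).
  - by apply: nearW => n /=; rewrite normr_ge0 duv.
  - exact: cvg_cst.
  - exact: cvg_geometric.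
by apply/eqP; rewrite -subr_eq0 -limB // (cvg_lim _ gap0).
Qed.

End GeometricIncrements.

Lemma ler_norm_sqrt_geometric (R : realType) (D B q : R) n : 0 <= B -> 0 <= q ->
  D ^+ 2 <= B * q ^+ n -> `|D| <= Num.sqrt B * Num.sqrt q ^+ n.
Proof.
move=> B0 q0 h.
rewrite -(ler_pXn2r (n:=2)) // ?nnegrE ?mulr_ge0 ?exprn_ge0 ?sqrtr_ge0 //.
by rewrite real_normK ?num_real // exprMn sqr_sqrtr // -exprM mulnC exprM sqr_sqrtr.
Qed.

Lemma powR_half_natmul (R : realType) (q : R) n : 0 <= q ->
  q `^ (n%:R / 2) = Num.sqrt q ^+ n.
Proof.
by move=> q0; rewrite mulrC powRrM powR12_sqrt // powR_mulrn // sqrtr_ge0.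
Qed.

Lemma esum_lty_ub (R : realType) (T : choiceType) (D : set T) (g : T -> R) :
  (forall t, D t -> 0 <= g t) -> (\esum_(t in D) (g t)%:E < +oo)%E ->
  exists2 M, 0 <= M & forall t, D t -> g t <= M.
Proof.
move=> g0 glty; set E := esum _ _ in glty.
have E0 : (0 <= E)%E by apply: esum_ge0 => t Dt; rewrite lee_fin g0.
exists (fine E); first exact: fine_ge0.
move=> t Dt; rewrite -lee_fin fineK ?ge0_fin_numE //.
apply: esum_ge; exists [set t]; last by rewrite fsbig_set1.
by split; [exact: finite_set1 | move=> _ ->].
Qed.

Section Words.
Variables (R : realType) (N : nat) (rs : 'I_N -> R).
Hypothesis rs_gt0 : forall i, 0 < rs i.

Lemma rmin_gt0 : 0 < rmin rs.
Proof. by apply: lt_bigmin => // i _; exact: rs_gt0. Qed.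

Lemma rmin_powR_gt0 alpha : 0 < rmin rs `^ alpha.
Proof. exact/powR_gt0/rmin_gt0. Qed.

Lemma rmin_le1 : rmin rs <= 1.
Proof. exact: bigmin_le_id. Qed.

Lemma rmin_le i : rmin rs <= rs i.
Proof. exact: bigmin_le. Qed.

Lemma rmin_pow_le_rw n x : inJ rs n x -> rmin rs ^+ n.+1 <= rw rs x.
Proof.
case: n => [/= -> | n /= [+ [_]]]; first by rewrite /rw big_nil expr1 rmin_le1.
case/lastP: x => [//|y a] _.
rewrite size_rcons /= -cats1 take_size_cat // /rw big_cat big_seq1 => ltr.
have r0 := ltW rmin_gt0.
rewrite [_ ^+ _.+2]exprSr; apply: ler_pM => //; [exact: exprn_ge0 | exact: ltW | exact: rmin_le].
Qed.

Lemma rmin_powR_le_rw alpha n x : 0 <= alpha -> inJ rs n x ->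
  (rmin rs `^ alpha) ^+ n.+1 <= rw rs x `^ alpha.
Proof.
move=> alpha0 /rmin_pow_le_rw le_rw.
have r0 := ltW rmin_gt0.
rewrite -powR_mulrn ?powR_ge0 // powRAC powR_mulrn //.
by rewrite ge0_ler_powR // nnegrE ?exprn_ge0 // (le_trans _ le_rw) ?exprn_ge0.
Qed.

End Words.

(* Qualified: MathComp-Analysis also defines an [edist]. *)
Lemma edistxx (R : realType) d (x : 'rV[R]_d) : Defs.edist x x = 0.
Proof. by rewrite /Defs.edist big1 ?sqrtr0 // => k _; rewrite subrr expr0n. Qed.

Lemma hedge_of_common_point (R : realType) d N (S : 'I_N -> 'rV[R]_d -> 'rV[R]_d)
    (rs : 'I_N -> R) (K : set 'rV[R]_d) (gamma : R) n (x y : word N) xi :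
  (forall i, 0 < rs i) -> 0 <= gamma -> inJ rs n x -> inJ rs n y -> x != y ->
  xi \in Sw S x @` K -> xi \in Sw S y @` K -> hedge S rs K gamma x y.
Proof.
move=> rs_gt0 gamma0 Jx Jy /eqP xy; rewrite !inE => -[a Ka ea] [b Kb eb].
exists n; do 3!split => //.
set E := [set _ | _ in K & _ in K].
have lbE : has_lbound E by exists 0 => _ [? _ [? _ <-]]; exact: sqrtr_ge0.
have E0 : E 0 by exists a => //; exists b => //; rewrite ea eb edistxx.
apply: le_trans (ge_inf lbE E0) _.
by rewrite mulr_ge0 // exprn_ge0 // ltW // rmin_gt0.
Qed.

Lemma in_DX_edge_energy_ub (R : realType) d N (S : 'I_N -> 'rV[R]_d -> 'rV[R]_d)
    (rs : 'I_N -> R) (K : set 'rV[R]_d) (gamma : R) (c : word N -> word N -> R)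
    (f : word N -> R) :
  (forall x y, adj S rs K gamma x y -> 0 <= c x y) -> in_DX S rs K gamma c f ->
  exists2 M : R, 0 <= M &
    forall x y, adj S rs K gamma x y -> c x y * (f x - f y) ^+ 2 <= M.
Proof.
move=> c0; rewrite /in_DX /energy; set E := esum _ _ => fin.
have Elty : (E < +oo)%E.
  clearbody E; case: E fin => [e _ | |] //; first exact: ltry.
  by rewrite (@gt0_muley R) ?lte_fin ?invr_gt0.
have [|M M0 ub] := esum_lty_ub _ Elty.
  by move=> [x y] /= xy; rewrite mulr_ge0 ?c0 ?sqr_ge0.
by exists M => // x y xy; exact: (ub (x, y)).
Qed.

Section NRW.
Variables (R : realType) (d N : nat) (S : 'I_N -> 'rV[R]_d -> 'rV[R]_d).
Variables (rs : 'I_N -> R) (K : set 'rV[R]_d) (gamma lambda alpha C1 : R).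
Variable c : word N -> word N -> R.

Hypothesis rs_gt0 : forall i, 0 < rs i.
Hypothesis alpha_ge0 : 0 <= alpha.
Hypothesis lambda_gt0 : 0 < lambda.
Hypothesis lambda_lt : lambda < rmin rs `^ alpha.
Hypothesis c_sym : forall x y, c x y = c y x.
Hypothesis c_vedge : forall n x y, inJ rs n.+1 x -> inJ rs n y -> prefix y x ->
  c x y = rw rs x `^ alpha * lambda ^- n.+1.
Hypothesis C1_gt0 : 0 < C1.
Hypothesis c_hedge : forall n x y, inJ rs n x -> hedge S rs K gamma x y ->
  C1 * (rw rs x `^ alpha * lambda ^- n) <= c x y.

Local Notation A := (rmin rs `^ alpha).
Local Notation q := (lambda / A).
Local Notation adj := (adj S rs K gamma).

Let A_gt0 : 0 < A := rmin_powR_gt0 rs_gt0 alpha.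

Lemma lambda_ratio_gt0 : 0 < q.
Proof. by rewrite divr_gt0 ?A_gt0. Qed.

Lemma lambda_ratio_lt1 : q < 1.
Proof. by rewrite ltr_pdivrMr ?A_gt0 // mul1r. Qed.

Lemma level_weight_ge n x : inJ rs n x -> A / q ^+ n <= rw rs x `^ alpha * lambda ^- n.
Proof.
move=> /(rmin_powR_le_rw rs_gt0 alpha_ge0) le_rw.
have -> : A / q ^+ n = A ^+ n.+1 * lambda ^- n.
  by rewrite expr_div_n invf_div exprS mulrA; field; rewrite ?expf_neq0 ?gt_eqF.
by rewrite ler_wpM2r // invr_ge0 exprn_ge0 ?ltW.
Qed.

Lemma conductance_ge0 x y : adj x y -> 0 <= c x y.
Proof.
have w0 n z : 0 <= rw rs z `^ alpha * lambda ^- n.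
  by rewrite mulr_ge0 ?powR_ge0 // invr_ge0 exprn_ge0 ?ltW.
case=> [[n [Jx [Jy yx]]] | [[n [Jy [Jx xy]]] | hxy]].
- by rewrite (c_vedge Jx Jy yx) w0.
- by rewrite c_sym (c_vedge Jy Jx xy) w0.
- case: (hxy) => n [Jx _]; apply: le_trans (c_hedge Jx hxy).
  by rewrite mulr_ge0 ?w0 ?ltW.
Qed.

Lemma ray_step_conductance_ge xs n : geodesic_ray rs xs ->
  A / q ^+ n <= c (xs n.+1) (xs n).
Proof.
move=> ray; have [Jn pre] := ray n; have [Jn1 _] := ray n.+1.
rewrite (c_vedge Jn1 Jn pre); apply: le_trans (level_weight_ge Jn1).
rewrite ler_pM2l ?A_gt0 // lef_pV2 ?posrE ?exprn_gt0 ?lambda_ratio_gt0 //.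
by rewrite exprS ler_piMl ?exprn_ge0 ?ltW ?lambda_ratio_gt0 ?lambda_ratio_lt1.
Qed.

Lemma hedge_conductance_ge n x y : inJ rs n x -> hedge S rs K gamma x y ->
  C1 * (A / q ^+ n) <= c x y.
Proof.
move=> Jx hxy; apply: le_trans (c_hedge Jx hxy).
by rewrite ler_pM2l // level_weight_ge.
Qed.

Variables (f : word N -> R) (M : R).
Hypothesis M_ge0 : 0 <= M.
Hypothesis edge_energy_le : forall x y, adj x y -> c x y * (f x - f y) ^+ 2 <= M.

Lemma edge_diff_le L n x y : 0 < L -> L * (A / q ^+ n) <= c x y -> adj x y ->
  `|f x - f y| <= Num.sqrt (M / (L * A)) * Num.sqrt q ^+ n.
Proof.
move=> L0 le_c xy; have A0 := A_gt0; have q0 := lambda_ratio_gt0.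
apply: ler_norm_sqrt_geometric; [by rewrite divr_ge0 // mulr_ge0 // ltW | exact: ltW |].
have -> : M / (L * A) * q ^+ n = M / (L * (A / q ^+ n)).
  by field; rewrite ?expf_neq0 ?gt_eqF.
have Lw0 : 0 < L * (A / q ^+ n) by rewrite mulr_gt0 // divr_gt0 // exprn_gt0.
rewrite ler_pdivlMr // mulrC; apply: le_trans (edge_energy_le xy).
by rewrite ler_wpM2r // sqr_ge0.
Qed.

Lemma ray_increment_le xs n : geodesic_ray rs xs ->
  `|f (xs n.+1) - f (xs n)| <= Num.sqrt (M / A) * Num.sqrt q ^+ n.
Proof.
move=> ray; have [Jn pre] := ray n; have [Jn1 _] := ray n.+1.
rewrite -[A in M / A]mul1r; apply: edge_diff_le => //.
  by rewrite mul1r ray_step_conductance_ge.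
by left; exists n.
Qed.

Hypothesis gamma_ge0 : 0 <= gamma.

Lemma ray_gap_le xs ys xi n : geodesic_ray rs xs -> geodesic_ray rs ys ->
  ray_converges_to S K xs xi -> ray_converges_to S K ys xi ->
  `|f (xs n) - f (ys n)| <= Num.sqrt (M / (C1 * A)) * Num.sqrt q ^+ n.
Proof.
move=> rx ry cx cy; have [Jx _] := rx n; have [Jy _] := ry n.
have [-> | xy] := eqVneq (xs n) (ys n).
  by rewrite subrr normr0 mulr_ge0 ?sqrtr_ge0 ?exprn_ge0.
have hxy := hedge_of_common_point rs_gt0 gamma_ge0 Jx Jy xy (cx n) (cy n).
by apply: edge_diff_le => //; [exact: hedge_conductance_ge hxy | right; right].
Qed.

End NRW.

Theorem lemma3p3 (R : realType) (d N : nat)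
  (S : 'I_N -> 'rV[R]_d -> 'rV[R]_d) (rs : 'I_N -> R)
  (K : set 'rV[R]_d) (alpha gamma lambda : R)
  (c : word N -> word N -> R) (f : word N -> R) :
  (2 <= N)%N ->
  contractive_similitudes S rs ->
  OSC S ->
  self_similar_set S K ->
  0 < alpha -> \sum_(i < N) rs i `^ alpha = 1 ->
  0 < gamma ->
  0 < lambda -> lambda < rmin rs `^ alpha ->
  NRW_conductance S rs K gamma lambda alpha c ->
  in_DX S rs K gamma c f ->
  (exists C : R, 0 < C /\
     forall xs : nat -> word N, geodesic_ray rs xs ->
       forall n : nat,
         `|f (xs n.+1) - f (xs n)| <= C * (lambda / rmin rs `^ alpha) `^ (n%:R / 2))
  /\ (forall xs : nat -> word N, geodesic_ray rs xs -> cvgn (f \o xs))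
  /\ (forall (xs ys : nat -> word N) (xi : 'rV[R]_d),
        geodesic_ray rs xs -> geodesic_ray rs ys ->
        ray_converges_to S K xs xi -> ray_converges_to S K ys xi ->
        limn (f \o xs) = limn (f \o ys)).
Proof.
move=> _ similitudes _ _ alpha_gt0 _ gamma_gt0 lambda_gt0 lambda_lt
  [c_sym [c_vedge [[C1 [C2 [C1_gt0 [_ c_hedge_bounds]]]] _]]] fDX.
have rs_gt0 i : 0 < rs i by case: (similitudes i) => /andP[].
have c_hedge n x y : inJ rs n x -> hedge S rs K gamma x y ->
    C1 * (rw rs x `^ alpha * lambda ^- n) <= c x y.
  by move=> Jx hxy; case: (c_hedge_bounds n x y Jx hxy).
have [M M_ge0 edge_energy_le] := in_DX_edge_energy_ub
  (conductance_ge0 lambda_gt0 c_sym c_vedge C1_gt0 c_hedge) fDX.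
have q0 : 0 <= lambda / rmin rs `^ alpha by apply/ltW/lambda_ratio_gt0.
have sqrt_q_lt1 : `|Num.sqrt (lambda / rmin rs `^ alpha)| < 1.
  by rewrite ger0_norm ?sqrtr_ge0 // -sqrtr1 ltr_sqrt // lambda_ratio_lt1.
have increment_le := ray_increment_le rs_gt0 (ltW alpha_gt0) lambda_gt0
  lambda_lt c_vedge M_ge0 edge_energy_le.
have ray_cvg xs : geodesic_ray rs xs -> cvgn (f \o xs).
  by move=> ray; apply: cvgn_geometric_increments sqrt_q_lt1 _ => n; exact: increment_le.
split.
  exists (Num.sqrt (M / rmin rs `^ alpha) + 1); split; first by rewrite ltr_wpDl ?sqrtr_ge0.
  move=> xs ray n; rewrite powR_half_natmul //; apply: le_trans (increment_le _ _ ray) _.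
  by rewrite ler_wpM2r ?exprn_ge0 ?sqrtr_ge0 ?lerDl.
split=> // xs ys xi rx ry cx cy.
apply: limn_eq_geometric_gap sqrt_q_lt1 (ray_cvg _ rx) (ray_cvg _ ry) _ => n.
exact: (ray_gap_le rs_gt0 (ltW alpha_gt0) lambda_gt0 C1_gt0 c_hedge M_ge0
  edge_energy_le (ltW gamma_gt0) n rx ry cx cy).
Qed.
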